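(* Let $a,\varepsilon\in\mathbb{R}$ and consider the piecewise smooth vector field on $\mathbb{R}^3$ $$Z(x,y,z)=\begin{cases}X_-(x,y,z), & x^2+y^2+z^2\le 1,\\ X_+(x,y,z), & x^2+y^2+z^2\ge 1,\end{cases}$$ with $X_-(x,y,z)=(y,\,-ay+x+az+\varepsilon,\,x)$ and $X_+(x,y,z)=(y,\,-ay-x-az+\varepsilon,\,x)$, with dynamics on the unit sphere $S^2$ given by Filippov's convention. (This is the first-order form, with $x=\dot z$, $y=\ddot z$, of $\dddot{z}+a\ddot{z}+b\dot{z}+abz=\varepsilon$ with $b=\mathrm{sign}(z^2+\dot z^2+\ddot z^2-1)$.) If $$\frac{|a|}{\sqrt{2}}<\varepsilon<|a| \quad\text{or}\quad -|a|<\varepsilon<-\frac{|a|}{\sqrt{2}},$$ then the system admits a pseudo-orbit.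
   Context: Write $h(x,y,z)=x^2+y^2+z^2-1$, so $S^2=h^{-1}(0)$ is the discontinuity surface. Let $\varphi_\pm(t,p)$ denote the flow of the smooth vector field $X_\pm$ (extended to all of $\mathbb{R}^3$) starting at $p$. For a vector field $X$, $Xh(p)=\langle X(p),\nabla h(p)\rangle$; a point $p\in S^2$ with $X_+h(p)=0$ or $X_-h(p)=0$ is a tangency point. A pseudo-orbit (closed pseudo-trajectory) of $Z$ means a closed curve formed by two trajectory arcs meeting $S^2$ in exactly two distinct points $P,Q$: there exist nonzero times $t_-,t_+$ of the same sign with $\varphi_-(t_-,P)=Q$, $\varphi_+(t_+,P)=Q$, such that $\varphi_-(t,P)$ lies in the open unit ball for all $t$ strictly between $0$ and $t_-$, and $\varphi_+(t,P)$ lies outside the closed unit ball for all $t$ strictly between $0$ and $t_+$. *)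

From Stdlib Require Import Reals Lra.
Open Scope R_scope.

Definition pt := (R * R * R)%type.
Definition px (p : pt) : R := fst (fst p).
Definition py (p : pt) : R := snd (fst p).
Definition pz (p : pt) : R := snd p.

Definition h (p : pt) : R := px p ^ 2 + py p ^ 2 + pz p ^ 2 - 1.

Definition Xminus (a eps : R) (p : pt) : pt :=
  (py p, - a * py p + px p + a * pz p + eps, px p).
Definition Xplus (a eps : R) (p : pt) : pt :=
  (py p, - a * py p - px p - a * pz p + eps, px p).

Definition is_trajectory (X : pt -> pt) (g : R -> pt) : Prop :=
  forall t,
    derivable_pt_lim (fun s => px (g s)) t (px (X (g t))) /\
    derivable_pt_lim (fun s => py (g s)) t (py (X (g t))) /\
    derivable_pt_lim (fun s => pz (g s)) t (pz (X (g t))).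

Definition is_flow_from (X : pt -> pt) (p : pt) (g : R -> pt) : Prop :=
  is_trajectory X g /\ g 0 = p.

Definition strictly_between0 (t s : R) : Prop := (0 < t < s) \/ (s < t < 0).

Definition has_pseudo_orbit (a eps : R) : Prop :=
  exists (P Q : pt) (tm tp : R) (gm gp : R -> pt),
    h P = 0 /\ h Q = 0 /\ P <> Q /\
    tm <> 0 /\ tp <> 0 /\ ((0 < tm /\ 0 < tp) \/ (tm < 0 /\ tp < 0)) /\
    is_flow_from (Xminus a eps) P gm /\ gm tm = Q /\
    is_flow_from (Xplus a eps) P gp /\ gp tp = Q /\
    (forall t, strictly_between0 t tm -> h (gm t) < 0) /\
    (forall t, strictly_between0 t tp -> 0 < h (gp t)).

From Stdlib Require Import Reals Lra Psatz.
From Coquelicot Require Import Coquelicot.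
Open Scope R_scope.

(* For [eps = a c], the planes [y - z = c] and [y + z = c] are invariant under
   [X_-] and [X_+] respectively, and on them both fields reduce to the linear
   systems [x' = y, y' = x] (a saddle) and [x' = y, y' = -x] (a centre).  When
   [c = cos α] with [1/2 < c^2 < 1], the points [(∓ sin α, cos α, 0)] of the
   sphere are joined inside the ball by an arc of the hyperbola
   [y^2 - x^2 = 2c^2 - 1] and outside it by an arc of the unit circle
   [x^2 + y^2 = 1]; together they form the pseudo-orbit.  Negative ratios
   [eps / a] follow from the symmetry [p ↦ -p], which maps [Z] for [eps] to [Z]
   for [-eps]. *)

Definition pt_opp (p : pt) : pt := (- px p, - py p, - pz p).

Lemma pt_opp_inj (p q : pt) : pt_opp p = pt_opp q -> p = q.
Proof.
  destruct p as [[x y] z], q as [[x' y'] z']; unfold pt_opp, px, py, pz; simpl.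
  intros E; injection E; intros; f_equal; [f_equal|]; lra.
Qed.

Lemma h_opp (p : pt) : h (pt_opp p) = h p.
Proof. unfold h, pt_opp, px, py, pz; simpl; ring. Qed.

Lemma Xminus_opp (a eps : R) (p : pt) :
  Xminus a (- eps) (pt_opp p) = pt_opp (Xminus a eps p).
Proof. unfold Xminus, pt_opp, px, py, pz; simpl; f_equal; try f_equal; ring. Qed.

Lemma Xplus_opp (a eps : R) (p : pt) :
  Xplus a (- eps) (pt_opp p) = pt_opp (Xplus a eps p).
Proof. unfold Xplus, pt_opp, px, py, pz; simpl; f_equal; try f_equal; ring. Qed.

Lemma is_trajectory_opp (X Y : pt -> pt) (g : R -> pt) :
  (forall p, Y (pt_opp p) = pt_opp (X p)) ->
  is_trajectory X g -> is_trajectory Y (fun t => pt_opp (g t)).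
Proof.
  intros HXY Hg t; rewrite HXY.
  destruct (Hg t) as [Hx [Hy Hz]].
  repeat split; [exact (derivable_pt_lim_opp _ _ _ Hx) |
    exact (derivable_pt_lim_opp _ _ _ Hy) | exact (derivable_pt_lim_opp _ _ _ Hz)].
Qed.

Lemma has_pseudo_orbit_opp (a eps : R) :
  has_pseudo_orbit a eps -> has_pseudo_orbit a (- eps).
Proof.
  intros (P & Q & tm & tp & gm & gp & HP & HQ & HPQ & Htm & Htp & Hsign &
          [Hgm HgmP] & HgmQ & [Hgp HgpP] & HgpQ & Hin & Hout).
  exists (pt_opp P), (pt_opp Q), tm, tp,
    (fun t => pt_opp (gm t)), (fun t => pt_opp (gp t)).
  rewrite !h_opp.
  repeat match goal with |- _ /\ _ => split end; auto.
  - intros E; apply HPQ, pt_opp_inj, E.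
  - split; [apply (is_trajectory_opp (Xminus a eps)); [apply Xminus_opp | exact Hgm] |].
    now rewrite HgmP.
  - now rewrite HgmQ.
  - split; [apply (is_trajectory_opp (Xplus a eps)); [apply Xplus_opp | exact Hgp] |].
    now rewrite HgpP.
  - now rewrite HgpQ.
  - intros t Ht; rewrite h_opp; auto.
  - intros t Ht; rewrite h_opp; auto.
Qed.

Lemma Xminus_trajectory_in_plane (a c : R) (u v : R -> R) :
  (forall t, derivable_pt_lim u t (v t)) ->
  (forall t, derivable_pt_lim v t (u t)) ->
  is_trajectory (Xminus a (a * c)) (fun t => (u t, v t, v t - c)).
Proof.
  intros Hu Hv t; unfold Xminus, px, py, pz; simpl.
  repeat split.
  - apply Hu.
  - replace (- a * v t + u t + a * (v t - c) + a * c) with (u t) by ring; apply Hv.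
  - replace (u t) with (u t - 0) by ring.
    exact (derivable_pt_lim_minus v (fct_cte c) t _ _ (Hv t) (derivable_pt_lim_const c t)).
Qed.

Lemma Xplus_trajectory_in_plane (a c : R) (u v : R -> R) :
  (forall t, derivable_pt_lim u t (v t)) ->
  (forall t, derivable_pt_lim v t (- u t)) ->
  is_trajectory (Xplus a (a * c)) (fun t => (u t, v t, c - v t)).
Proof.
  intros Hu Hv t; unfold Xplus, px, py, pz; simpl.
  repeat split.
  - apply Hu.
  - replace (- a * v t - u t - a * (c - v t) + a * c) with (- u t) by ring; apply Hv.
  - replace (u t) with (0 - - u t) by ring.
    exact (derivable_pt_lim_minus (fct_cte c) v t _ _ (derivable_pt_lim_const c t) (Hv t)).
Qed.

Definition minus_arc (c s t : R) : pt :=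
  (c * sinh t - s * cosh t, c * cosh t - s * sinh t, c * cosh t - s * sinh t - c).

Definition plus_arc (alpha t : R) : pt :=
  (sin (t - alpha), cos (t - alpha), cos alpha - cos (t - alpha)).

Lemma minus_arc_trajectory (a c s : R) :
  is_trajectory (Xminus a (a * c)) (minus_arc c s).
Proof.
  apply Xminus_trajectory_in_plane; intros t; apply is_derive_Reals;
    auto_derive; auto; unfold Rminus; ring.
Qed.

Lemma plus_arc_trajectory (a alpha : R) :
  is_trajectory (Xplus a (a * cos alpha)) (plus_arc alpha).
Proof.
  apply Xplus_trajectory_in_plane; intros t; apply is_derive_Reals;
    auto_derive; auto; unfold Rminus; ring.
Qed.

Lemma minus_arc_0 (c s : R) : minus_arc c s 0 = (- s, c, 0).
Proof. unfold minus_arc; rewrite sinh_0, cosh_0; f_equal; [f_equal|]; ring. Qed.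

Lemma minus_arc_end (c s : R) :
  0 < s < c -> minus_arc c s (ln ((c + s) / (c - s))) = (s, c, 0).
Proof.
  intros Hsc.
  assert (Hk : 0 < (c + s) / (c - s)) by (apply Rdiv_lt_0_compat; lra).
  unfold minus_arc, cosh, sinh; rewrite exp_Ropp, exp_ln by exact Hk.
  f_equal; [f_equal|]; field; lra.
Qed.

Lemma plus_arc_0 (alpha : R) : plus_arc alpha 0 = (- sin alpha, cos alpha, 0).
Proof.
  unfold plus_arc; rewrite Rminus_0_l, sin_neg, cos_neg; f_equal; ring.
Qed.

Lemma plus_arc_end (alpha : R) :
  plus_arc alpha (2 * alpha) = (sin alpha, cos alpha, 0).
Proof.
  unfold plus_arc; replace (2 * alpha - alpha) with alpha by ring; f_equal; ring.
Qed.

Lemma minus_arc_inside_ball (c s t : R) :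
  c * c + s * s = 1 -> 0 < s < c -> 0 < t < ln ((c + s) / (c - s)) ->
  h (minus_arc c s t) < 0.
Proof.
  intros Hcs Hsc Ht.
  set (v := c * cosh t - s * sinh t).
  set (u := c * sinh t - s * cosh t).
  assert (He : exp t * exp (- t) = 1)
    by (rewrite <- exp_plus, Rplus_opp_r; apply exp_0).
  assert (Hhyp : v * v - u * u = c * c - s * s)
    by (unfold u, v, cosh, sinh; nra).
  assert (Hv_pos : 0 < v).
  { assert (0 < exp (- t)) by apply exp_pos.
    assert (0 < sinh t) by (rewrite <- sinh_0; apply sinh_lt; lra).
    unfold v, cosh, sinh in *; nra. }
  assert (Hv_c : v < c).
  { set (k := (c + s) / (c - s)) in Ht.
    assert (Hk : (c - s) * k = c + s) by (unfold k; field; lra).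
    assert (Hek : 1 < exp t < k).
    { rewrite <- exp_0, <- (exp_ln k) by (unfold k; apply Rdiv_lt_0_compat; lra).
      split; apply exp_increasing; lra. }
    (* [2 e^t (v - c) = (e^t - 1) ((c - s) e^t - (c + s))] *)
    assert (0 < (exp t - 1) * ((c + s) - (c - s) * exp t)) by
      (apply Rmult_lt_0_compat; nra).
    unfold v, cosh, sinh; nra. }
  change (h (u, v, v - c) < 0).
  replace (h (u, v, v - c)) with ((3 * v + c) * (v - c))
    by (unfold h, px, py, pz; simpl; nra).
  nra.
Qed.

Lemma cos_lt_cos_abs (alpha x : R) :
  Rabs x < alpha <= PI -> cos alpha < cos x.
Proof.
  intros Hx.
  destruct (Rcase_abs x) as [Hneg | Hpos].
  - rewrite <- (cos_neg x); rewrite Rabs_left in Hx by exact Hneg.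
    apply cos_decreasing_1; lra.
  - rewrite Rabs_right in Hx by exact Hpos.
    apply cos_decreasing_1; lra.
Qed.

Lemma plus_arc_outside_ball (alpha t : R) :
  alpha <= PI -> 0 < t < 2 * alpha -> 0 < h (plus_arc alpha t).
Proof.
  intros Hal Ht.
  assert (Hcos : cos alpha < cos (t - alpha))
    by (apply cos_lt_cos_abs; split; [apply Rabs_def1|]; lra).
  unfold h, plus_arc, px, py, pz; simpl.
  pose proof (sin2_cos2 (t - alpha)); unfold Rsqr in *.
  nra.
Qed.

Lemma pseudo_orbit_of_angle (a alpha : R) :
  0 < alpha < PI -> sin alpha < cos alpha -> has_pseudo_orbit a (a * cos alpha).
Proof.
  intros Hal Hsc.
  assert (Hs : 0 < sin alpha) by (apply sin_gt_0; lra).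
  assert (Hcs : cos alpha * cos alpha + sin alpha * sin alpha = 1)
    by (pose proof (sin2_cos2 alpha); unfold Rsqr in *; lra).
  assert (HT : 0 < ln ((cos alpha + sin alpha) / (cos alpha - sin alpha))).
  { rewrite <- ln_1; apply ln_increasing; [lra|].
    apply Rlt_div_r; lra. }
  exists (- sin alpha, cos alpha, 0), (sin alpha, cos alpha, 0),
    (ln ((cos alpha + sin alpha) / (cos alpha - sin alpha))), (2 * alpha),
    (minus_arc (cos alpha) (sin alpha)), (plus_arc alpha).
  repeat match goal with |- _ /\ _ => split end.
  - unfold h, px, py, pz; simpl; nra.
  - unfold h, px, py, pz; simpl; nra.
  - intros E; injection E; lra.
  - lra.
  - lra.
  - left; lra.
  - split; [apply minus_arc_trajectory | apply minus_arc_0].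
  - apply minus_arc_end; lra.
  - split; [apply plus_arc_trajectory | apply plus_arc_0].
  - apply plus_arc_end.
  - intros t [Ht | Ht]; [apply minus_arc_inside_ball | ]; lra.
  - intros t [Ht | Ht]; [apply plus_arc_outside_ball | ]; lra.
Qed.

Lemma pseudo_orbit_of_ratio (a c : R) :
  0 < c -> c * c < 1 -> 1 < 2 * (c * c) -> has_pseudo_orbit a (a * c).
Proof.
  intros Hc Hc1 Hc2.
  assert (Hbound : -1 < c < 1) by nra.
  pose proof (acos_bound_lt c Hbound) as Hal.
  assert (Hcos : cos (acos c) = c) by (apply cos_acos; lra).
  assert (Hsin : 0 < sin (acos c)) by (apply sin_gt_0; lra).
  pose proof (sin2_cos2 (acos c)) as Hsc; unfold Rsqr in Hsc; rewrite Hcos in Hsc.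
  rewrite <- Hcos.
  apply pseudo_orbit_of_angle; [exact Hal | rewrite Hcos; nra].
Qed.

Lemma pseudo_orbit_of_sqr_bounds (a eps : R) :
  a * a < 2 * (eps * eps) -> eps * eps < a * a -> has_pseudo_orbit a eps.
Proof.
  intros Hlow Hup.
  assert (Ha : a <> 0) by (intros ->; nra).
  set (c := eps / a).
  assert (Hcc : c * c * (a * a) = eps * eps) by (unfold c; field; exact Ha).
  assert (Haa : 0 < a * a) by nra.
  assert (Hc1 : c * c < 1) by nra.
  assert (Hc2 : 1 < 2 * (c * c)) by nra.
  replace eps with (a * c) by (unfold c; field; exact Ha).
  destruct (Rlt_or_le 0 c) as [Hc | Hc].
  - now apply pseudo_orbit_of_ratio.
  - replace (a * c) with (- (a * - c)) by ring.
    apply has_pseudo_orbit_opp, pseudo_orbit_of_ratio; nra.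
Qed.

Lemma sqr_bounds_of_window (a eps : R) :
  (Rabs a / sqrt 2 < eps < Rabs a) \/ (- Rabs a < eps < - (Rabs a / sqrt 2)) ->
  a * a < 2 * (eps * eps) /\ eps * eps < a * a.
Proof.
  intros Heps.
  assert (Hs2 : sqrt 2 * sqrt 2 = 2) by (apply sqrt_sqrt; lra).
  assert (Hs2_pos : 0 < sqrt 2) by (apply sqrt_lt_R0; lra).
  assert (Ha : Rabs a * Rabs a = a * a) by (rewrite <- Rabs_mult; apply Rabs_right; nra).
  set (q := Rabs a / sqrt 2) in Heps.
  assert (Hq : 0 <= q) by (apply Rdiv_le_0_compat; [apply Rabs_pos | lra]).
  assert (Hqq : 2 * (q * q) = a * a)
    by (rewrite <- Ha, <- Hs2; unfold q; field; lra).
  destruct Heps; split; nra.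
Qed.

Theorem theorem1 (a eps : R) :
  ((Rabs a / sqrt 2 < eps < Rabs a) \/ (- Rabs a < eps < - (Rabs a / sqrt 2))) ->
  has_pseudo_orbit a eps.
Proof.
  intros Heps.
  destruct (sqr_bounds_of_window a eps Heps) as [Hlow Hup].
  exact (pseudo_orbit_of_sqr_bounds a eps Hlow Hup).
Qed.
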